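(* Let $M$ be an $n\times n$ primitive Boolean matrix with Boolean rank $b(M)=2$. Then $k(M)=2$ if and only if $M$ has a Boolean rank factorization $M=AB$ (with $A$ an $n\times 2$ and $B$ a $2\times n$ Boolean matrix) such that: (i) $BA=W_2$ or $BA=J_2$, where $W_2=\left[\begin{array}{cc}1&1\\1&0\end{array}\right]$ and $J_2=\left[\begin{array}{cc}1&1\\1&1\end{array}\right]$; (ii) some row of $A$ equals $e_1^t(2)$ and some row of $A$ equals $e_2^t(2)$; (iii) no column of $B$ equals $e_1(2)+e_2(2)$.
   Context: Boolean matrices are $(0,1)$-matrices with Boolean arithmetic ($1+1=1$). A square Boolean matrix is primitive if some power has all entries $1$; its scrambling index $k(M)$ is the smallest positive integer $k$ such that any two rows of $M^k$ have a $1$ in a common position (equivalently $M^k(M^t)^k=J$). The Boolean rank $b(M)$ is the smallest $b$ with $M=AB$, $A$ of size $n\times b$ and $B$ of size $b\times n$ Boolean; such a factorization is a Boolean rank factorization. $e_i(2)$ denotes the $i$th column of the $2\times 2$ identity matrix. *)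

From mathcomp Require Import all_boot all_algebra.
Set Implicit Arguments. Unset Strict Implicit. Unset Printing Implicit Defensive.

Definition bmul (m n p : nat) (A : 'M[bool]_(m, n)) (B : 'M[bool]_(n, p))
  : 'M[bool]_(m, p) := \matrix_(i, j) [exists k, A i k && B k j].

Definition bone (n : nat) : 'M[bool]_n := \matrix_(i, j) (i == j).
Definition ball (m n : nat) : 'M[bool]_(m, n) := const_mx true.

Fixpoint bpow (n : nat) (M : 'M[bool]_n) (k : nat) : 'M[bool]_n :=
  if k is k'.+1 then bmul (bpow M k') M else bone n.

Definition bool_primitive (n : nat) (M : 'M[bool]_n) : Prop :=
  exists k, bpow M k = ball n n.

Definition scrambling_at (n : nat) (M : 'M[bool]_n) (k : nat) : Prop :=
  forall i j : 'I_n, exists l : 'I_n, bpow M k i l && bpow M k j l.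

Definition is_scrambling_index (n : nat) (M : 'M[bool]_n) (k : nat) : Prop :=
  (0 < k)%N /\ scrambling_at M k /\
  (forall k', (0 < k')%N -> (k' < k)%N -> ~ scrambling_at M k').

Definition has_bool_factorization (m n : nat) (M : 'M[bool]_(m, n)) (b : nat) : Prop :=
  exists (A : 'M[bool]_(m, b)) (B : 'M[bool]_(b, n)), M = bmul A B.

Definition is_bool_rank (m n : nat) (M : 'M[bool]_(m, n)) (b : nat) : Prop :=
  has_bool_factorization M b /\ (forall b', (b' < b)%N -> ~ has_bool_factorization M b').

Definition W2 : 'M[bool]_2 := \matrix_(i, j) ~~ ((i == 1 :> nat) && (j == 1 :> nat)).
Definition J2 : 'M[bool]_2 := ball 2 2.

(* e_i(2): the i-th column of the 2x2 identity, i = 1 or 2 (1-based as in the paper) *)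
Definition e2 (i : nat) : 'cV[bool]_2 := \col_j (j.+1 == i).
Definition e2t (i : nat) : 'rV[bool]_2 := \row_j (j.+1 == i).
Definition e2sum : 'cV[bool]_2 := \col_j (e2 1 j ord0 || e2 2 j ord0).

From mathcomp Require Import all_boot all_algebra fingroup perm.
Set Implicit Arguments. Unset Strict Implicit. Unset Printing Implicit Defensive.

(* Write M = AB with A of size n x 2.  If k(M) = 2, some two rows of M have
   disjoint supports; as A has only two columns, they sit in front of the rows
   e_1^t and e_2^t of A, so they are the two rows of B, which are therefore
   disjoint: B has no column e_1 + e_2.  Scrambling these two rows in
   M^2 = A (BA) B forces a full column r of BA, and primitivity forces row r of
   BA to be full as well: otherwise that row is e_r^t, and the row of M^k in
   front of the unit row e_r^t of A equals row r of B for every k.  Relabelling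
   the two columns of A so that r = 1 yields BA = W_2 or J_2.  Conversely, the
   unit rows of A give two disjoint rows of M, so k(M) <> 1, and the full first
   column of BA puts every l with B_1l = 1 into every row of M^2 = A (BA) B. *)
Lemma bmulE m n p (A : 'M[bool]_(m, n)) (B : 'M[bool]_(n, p)) i j :
  bmul A B i j = [exists k, A i k && B k j].
Proof. by rewrite mxE. Qed.

Lemma bmulA m n p q (A : 'M[bool]_(m, n)) (B : 'M[bool]_(n, p)) (C : 'M[bool]_(p, q)) :
  bmul (bmul A B) C = bmul A (bmul B C).
Proof.
apply/matrixP=> i j; rewrite !bmulE; apply/existsP/existsP.
- case=> k /andP[]; rewrite bmulE => /existsP[l /andP[Ail Blk]] Ckj.
  by exists l; rewrite Ail bmulE; apply/existsP; exists k; rewrite Blk.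
- case=> l /andP[Ail]; rewrite bmulE => /existsP[k /andP[Blk Ckj]].
  by exists k; rewrite Ckj andbT bmulE; apply/existsP; exists l; rewrite Ail.
Qed.

Lemma bmul1mx m n (A : 'M[bool]_(m, n)) : bmul (bone m) A = A.
Proof.
apply/matrixP=> i j; rewrite bmulE; apply/existsP/idP => [[k]|Aij].
- by rewrite mxE => /andP[/eqP->].
- by exists i; rewrite mxE eqxx.
Qed.

Lemma bmulmx1 m n (A : 'M[bool]_(m, n)) : bmul A (bone n) = A.
Proof.
apply/matrixP=> i j; rewrite bmulE; apply/existsP/idP => [[k]|Aij].
- by rewrite mxE => /andP[Aik /eqP<-].
- by exists j; rewrite mxE eqxx andbT.
Qed.

Lemma row_bmul m n p (A : 'M[bool]_(m, n)) (B : 'M[bool]_(n, p)) i :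
  row i (bmul A B) = bmul (row i A) B.
Proof. by apply/rowP=> j; rewrite !mxE; apply: eq_existsb => k; rewrite mxE. Qed.

Lemma bpowS n (M : 'M[bool]_n) k : bpow M k.+1 = bmul (bpow M k) M.
Proof. by []. Qed.

Lemma bpow1 n (M : 'M[bool]_n) : bpow M 1 = M.
Proof. exact: bmul1mx. Qed.

Lemma bpowSr n (M : 'M[bool]_n) k : bpow M k.+1 = bmul M (bpow M k).
Proof.
elim: k => [|k IHk]; first by rewrite bpow1 bmulmx1.
by rewrite bpowS {1}IHk bmulA -bpowS.
Qed.

Lemma bpow_bmul m n (A : 'M[bool]_(m, n)) (B : 'M[bool]_(n, m)) k :
  bpow (bmul A B) k.+1 = bmul A (bmul (bpow (bmul B A) k) B).
Proof.
elim: k => [|k IHk]; first by rewrite bpow1 bmul1mx.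
by rewrite [LHS]bpowS IHk [in RHS]bpowS !bmulA.
Qed.

Definition unit_row b (p : 'I_b) : 'rV[bool]_b := \row_q (q == p).

Definition disjoint_rows b n (B : 'M[bool]_(b, n)) : Prop :=
  forall l p q, B p l -> B q l -> p = q.

Lemma bmul_unit_row b n (p : 'I_b) (B : 'M[bool]_(b, n)) :
  bmul (unit_row p) B = row p B.
Proof.
apply/rowP=> l; rewrite !mxE; apply/existsP/idP => [[q]|Bpl].
- by rewrite mxE => /andP[/eqP->].
- by exists p; rewrite mxE eqxx.
Qed.

Lemma bmul_unit_rowE m n b (A : 'M[bool]_(m, b)) (B : 'M[bool]_(b, n)) i p l :
  row i A = unit_row p -> bmul A B i l = B p l.
Proof.
move=> Ai; have /rowP/(_ l) : row i (bmul A B) = row p B.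
  by rewrite row_bmul Ai bmul_unit_row.
by rewrite [LHS]mxE [RHS]mxE.
Qed.

Lemma row_bpow_unit_row b (C : 'M[bool]_b) p k :
  row p C = unit_row p -> row p (bpow C k) = unit_row p.
Proof.
move=> Cp; elim: k => [|k IHk]; first by apply/rowP=> q; rewrite !mxE eq_sym.
by rewrite bpowS row_bmul IHk bmul_unit_row.
Qed.

Lemma bpow_bmul_unit_rowE n b (A : 'M[bool]_(n, b)) (B : 'M[bool]_(b, n)) i p k l :
  row i A = unit_row p -> bpow (bmul A B) k.+1 i l = bmul (bpow (bmul B A) k) B p l.
Proof. by move=> Ai; rewrite bpow_bmul (bmul_unit_rowE _ _ Ai). Qed.

Lemma bpow2_col_full n b (A : 'M[bool]_(n, b)) (B : 'M[bool]_(b, n)) r l :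
  (forall i, exists q, A i q) -> (forall t, bmul B A t r) -> B r l ->
  forall i, bpow (bmul A B) 2 i l.
Proof.
move=> Anz BAr Brl i; have [q Aiq] := Anz i.
rewrite bpow_bmul bpow1 !bmulE; apply/existsP; exists q; rewrite Aiq bmulE.
by apply/existsP; exists r; rewrite BAr.
Qed.

Lemma primitive_row_neq_unit_row n b (A : 'M[bool]_(n, b)) (B : 'M[bool]_(b, n)) i r t l :
  (exists k, bpow (bmul A B) k.+1 = ball n n) -> row i A = unit_row r ->
  disjoint_rows B -> B t l -> t != r -> row r (bmul B A) != unit_row r.
Proof.
move=> [k Mk] Ai dB Btl; apply: contraNN => /eqP BAr.
have Brl : B r l.
  have := bpow_bmul_unit_rowE B k l Ai.
  by rewrite Mk mxE (bmul_unit_rowE _ _ (row_bpow_unit_row k BAr)).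
by rewrite (dB _ _ _ Btl Brl).
Qed.

Lemma bmul_perm_inner m n b (s : 'S_b) (A : 'M[bool]_(m, b)) (B : 'M[bool]_(b, n)) :
  bmul (col_perm s A) (row_perm s B) = bmul A B.
Proof.
apply/matrixP=> i j; rewrite !bmulE; apply/existsP/existsP => [[k]|[k]].
- by rewrite !mxE; exists (s k).
- by exists (s^-1 k)%g; rewrite !mxE permKV.
Qed.

Lemma bmul_perm_outer m b (s : 'S_b) (A : 'M[bool]_(m, b)) (B : 'M[bool]_(b, m)) i j :
  bmul (row_perm s B) (col_perm s A) i j = bmul B A (s i) (s j).
Proof. by rewrite !bmulE; apply: eq_existsb => k; rewrite !mxE. Qed.

Lemma row_col_perm_unit_row n b (s : 'S_b) (A : 'M[bool]_(n, b)) i p :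
  row i A = unit_row (s p) -> row i (col_perm s A) = unit_row p.
Proof.
by move=> /rowP Ai; apply/rowP=> q; have := Ai (s q); rewrite !mxE (inj_eq perm_inj).
Qed.

Lemma disjoint_rows_perm n b (s : 'S_b) (B : 'M[bool]_(b, n)) :
  disjoint_rows B -> disjoint_rows (row_perm s B).
Proof. by move=> dB l p q; rewrite !mxE => Bp Bq; apply: perm_inj; apply: dB Bp Bq. Qed.

Lemma bpow_row_nonzero n (M : 'M[bool]_n) k i l :
  bpow M k.+1 i l -> exists m, M i m.
Proof. by rewrite bpowSr bmulE => /existsP[m /andP[Mim _]]; exists m. Qed.

(* For [n <= 1] the identity matrix already equals [J], so [M = 0] is primitive. *)
Lemma primitive_pos_exponent n (M : 'M[bool]_n) (i j : 'I_n) :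
  i != j -> bool_primitive M -> exists k, bpow M k.+1 = ball n n.
Proof.
move=> ij [[|k] Mk]; last by exists k.
by have := congr1 (fun X : 'M[bool]_n => X i j) Mk; rewrite /= !mxE (negbTE ij).
Qed.

Lemma primitive_row_nonzero n (M : 'M[bool]_n) (i j : 'I_n) :
  i != j -> bool_primitive M -> forall i', exists m, M i' m.
Proof.
move=> ij /(primitive_pos_exponent ij)[k Mk] i'.
by apply: (@bpow_row_nonzero _ _ k _ i'); rewrite Mk mxE.
Qed.

Lemma not_scrambling_disjoint_rows n (M : 'M[bool]_n) :
  ~ scrambling_at M 1 -> exists i j, forall l, ~~ (M i l && M j l).
Proof.
move=> nsc.
have [/existsP[i /existsP[j /forallP dij]]|] :=
  boolP [exists i, exists j, [forall l, ~~ (M i l && M j l)]]; first by exists i, j.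
rewrite negb_exists => /forallP ndis; case: nsc => i j.
move: (ndis i); rewrite negb_exists => /forallP/(_ j); rewrite negb_forall.
by case/existsP=> l; rewrite negbK bpow1; exists l.
Qed.

Lemma bmul_disjoint_rows m n b (A : 'M[bool]_(m, b)) (B : 'M[bool]_(b, n)) i j q l :
  (forall l', ~~ (bmul A B i l' && bmul A B j l')) -> A i q -> B q l -> ~~ A j q.
Proof.
move=> dij Aiq Bql; apply: contraNN (dij l) => Ajq.
by rewrite !bmulE; apply/andP; split; apply/existsP; exists q; apply/andP.
Qed.

Lemma ord2_cover (p q r : 'I_2) : p != q -> r = p \/ r = q.
Proof.
by case: p q r => [[|[|//]] ?] [[|[|//]] ?] [[|[|//]] ?] //= _;
  [left|right|right|left]; apply: val_inj.
Qed.

Lemma ord2P (t : 'I_2) : t = ord0 \/ t = ord_max.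
Proof. exact: ord2_cover. Qed.

Lemma unit_row2 (p q : 'I_2) (v : 'rV[bool]_2) :
  p != q -> v ord0 p -> ~~ v ord0 q -> v = unit_row p.
Proof.
move=> pq vp vq; apply/rowP=> r; rewrite mxE.
by case: (ord2_cover r pq) => ->; rewrite ?eqxx // (negbTE vq) eq_sym (negbTE pq).
Qed.

Definition normal_factor n (A : 'M[bool]_(n, 2)) (B : 'M[bool]_(2, n)) : Prop :=
  [/\ forall t, bmul B A ord0 t && bmul B A t ord0,
      forall t, exists i, row i A = unit_row t
    & disjoint_rows B].

Section RankTwo.

Variables (n : nat) (A : 'M[bool]_(n, 2)) (B : 'M[bool]_(2, n)).
Local Notation M := (bmul A B).

(* Only two columns: the witnesses [p] of [M i k1] and [q] of [M j k2] are
   distinct and exhaust ['I_2]. *)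
Lemma disjoint_rows_unit_rows i j k1 k2 :
  (forall l, ~~ (M i l && M j l)) -> M i k1 -> M j k2 ->
  exists p q, [/\ p != q, row i A = unit_row p & row j A = unit_row q].
Proof.
move=> dij; rewrite !bmulE => /existsP[p /andP[Aip Bpk]] /existsP[q /andP[Ajq Bqk]].
have nAjp := bmul_disjoint_rows dij Aip Bpk.
have nAiq : ~~ A i q.
  by apply: (bmul_disjoint_rows (i := j)) Ajq Bqk => l; rewrite andbC.
have pq : p != q by apply: contraNneq nAjp => ->.
exists p, q; split=> //;
  [apply: (unit_row2 pq) | apply: (unit_row2 (q := p))]; by rewrite ?mxE // eq_sym.
Qed.

Lemma disjoint_rows_of_unit_rows i j p q :
  p != q -> row i A = unit_row p -> row j A = unit_row q ->
  (forall l, ~~ (M i l && M j l)) -> disjoint_rows B.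
Proof.
move=> pq Ai Aj dij l p' q' Bp' Bq'; apply/eqP/negP => p'q'.
have /negP := dij l; apply; rewrite (bmul_unit_rowE _ _ Ai) (bmul_unit_rowE _ _ Aj).
by case: (ord2_cover p' pq) (ord2_cover q' pq) p'q' Bp' Bq' => -> [] -> //= _ -> ->.
Qed.

Lemma scrambling2_full_col i j p q :
  p != q -> row i A = unit_row p -> row j A = unit_row q -> disjoint_rows B ->
  scrambling_at M 2 -> exists r, forall t, bmul B A t r.
Proof.
move=> pq Ai Aj dB /(_ i j)[l /andP[]].
rewrite (bpow_bmul_unit_rowE _ 1 _ Ai) (bpow_bmul_unit_rowE _ 1 _ Aj) !bpow1 !bmulE.
move=> /existsP[r /andP[BApr Brl]] /existsP[r' /andP[BAqr' Br'l]].
have rr' := dB _ _ _ Brl Br'l; subst r'.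
by exists r => t; case: (ord2_cover t pq) => ->.
Qed.

Lemma primitive_full_row r :
  (exists k, bpow M k.+1 = ball n n) -> (forall t, exists i, row i A = unit_row t) ->
  disjoint_rows B -> (forall t, exists l, B t l) ->
  (forall t, bmul B A t r) -> forall t, bmul B A r t.
Proof.
move=> prim Aunit dB Bnz BAr t; have [->|tr] := eqVneq t r; first exact: BAr.
apply/negPn/negP => nBArt; have [i Ai] := Aunit r; have [l Btl] := Bnz t.
case/negP: (primitive_row_neq_unit_row prim Ai dB Btl tr); apply/eqP.
by apply: (unit_row2 (q := t)); rewrite 1?eq_sym // mxE ?BAr.
Qed.

Lemma normal_factor_perm r :
  (forall t, bmul B A r t && bmul B A t r) -> (forall t, exists i, row i A = unit_row t) ->
  disjoint_rows B -> normal_factor (col_perm (tperm ord0 r) A) (row_perm (tperm ord0 r) B).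
Proof.
move=> BAr Aunit dB; split.
- by move=> t; rewrite !bmul_perm_outer tpermL.
- by move=> t; have [i Ai] := Aunit (tperm ord0 r t); exists i; apply: row_col_perm_unit_row.
- exact: disjoint_rows_perm.
Qed.

Lemma scrambling_index2_normal_factor :
  bool_primitive M -> scrambling_at M 2 -> ~ scrambling_at M 1 ->
  exists A' B', M = bmul A' B' /\ normal_factor A' B'.
Proof.
move=> prim sc2 nsc1.
have nzM i : exists m, M i m.
  by have [l /andP[M2il _]] := sc2 i i; apply: bpow_row_nonzero M2il.
have [i [j dij]] := not_scrambling_disjoint_rows nsc1.
have [k1 Mik1] := nzM i; have [k2 Mjk2] := nzM j.
have [p [q [pq Ai Aj]]] := disjoint_rows_unit_rows dij Mik1 Mjk2.
have dB := disjoint_rows_of_unit_rows pq Ai Aj dij.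
have Aunit t : exists i', row i' A = unit_row t.
  by case: (ord2_cover t pq) => ->; [exists i | exists j].
have Bnz t : exists l, B t l.
  by have [i' Ai'] := Aunit t; have [l] := nzM i'; rewrite (bmul_unit_rowE _ _ Ai'); exists l.
have ij : i != j by apply: contraTneq (dij k1) => <-; rewrite Mik1.
have [r BAr] := scrambling2_full_col pq Ai Aj dB sc2.
have BAr' := primitive_full_row (primitive_pos_exponent ij prim) Aunit dB Bnz BAr.
exists (col_perm (tperm ord0 r) A), (row_perm (tperm ord0 r) B).
by split; [rewrite bmul_perm_inner | apply: normal_factor_perm => // t; rewrite BAr BAr'].
Qed.

Lemma normal_factor_scrambling2 :
  bool_primitive M -> normal_factor A B -> scrambling_at M 2 /\ ~ scrambling_at M 1.
Proof.
move=> prim [BA0 Aunit dB]; have [i0 Ai0] := Aunit ord0; have [j0 Aj0] := Aunit ord_max.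
have ij : i0 != j0 by apply/eqP => e; move/rowP/(_ ord0): Aj0; rewrite -e Ai0 !mxE.
have nzM := primitive_row_nonzero ij prim.
split.
- have [l0] := nzM i0; rewrite (bmul_unit_rowE _ _ Ai0) => B0l0.
  have Anz i : exists q, A i q.
    by have [m] := nzM i; rewrite bmulE => /existsP[q /andP[Aiq _]]; exists q.
  have BA0' t : bmul B A t ord0 by have /andP[] := BA0 t.
  by move=> i j; exists l0; rewrite !(bpow2_col_full Anz BA0' B0l0).
- move=> /(_ i0 j0)[l]; rewrite bpow1 (bmul_unit_rowE _ _ Ai0) (bmul_unit_rowE _ _ Aj0).
  by case/andP=> B0 B1; have := dB _ _ _ B0 B1.
Qed.

End RankTwo.

Lemma W2_or_J2P (C : 'M[bool]_2) :
  C = W2 \/ C = J2 <-> forall t, C ord0 t && C t ord0.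
Proof.
split=> [[]-> t|C0]; rewrite ?mxE ?andbF //.
have C0r t : C ord0 t by case/andP: (C0 t).
have C0c t : C t ord0 by case/andP: (C0 t).
have [C11|C11] := boolP (C ord_max ord_max); [right|left]; apply/matrixP=> i j;
  rewrite !mxE; case: (ord2P i) (ord2P j) => -> [] ->; rewrite ?C0r ?C0c //.
by rewrite (negbTE C11).
Qed.

Lemma e2t_unit_row (p : 'I_2) : e2t p.+1 = unit_row p.
Proof. by apply/rowP=> q; rewrite !mxE eqSS. Qed.

Lemma disjoint_rows2P n (B : 'M[bool]_(2, n)) :
  disjoint_rows B <-> forall j, col j B <> e2sum.
Proof.
split=> [dB j /matrixP B2 | nB l p q Bp Bq].
  have := B2 ord0 ord0; have := B2 ord_max ord0; rewrite !mxE /= => B1 B0.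
  by have := dB _ _ _ B0 B1.
apply/eqP/negPn/negP => pq; apply: (nB l); apply/matrixP=> t u; rewrite (ord1 u) !mxE /=.
by case: (ord2_cover t pq) => ->; case: (ord2P p) (ord2P q) pq Bp Bq => -> [] -> //= _ -> ->.
Qed.

Lemma normal_factorP n (A : 'M[bool]_(n, 2)) (B : 'M[bool]_(2, n)) :
  normal_factor A B <->
  [/\ bmul B A = W2 \/ bmul B A = J2, exists i, row i A = e2t 1,
      exists i, row i A = e2t 2 & forall j, col j B <> e2sum].
Proof.
split=> [[BA0 Aunit dB] | [BA0 A0 A1 dB]].
  split; [exact/W2_or_J2P | | | exact/disjoint_rows2P].
  - by rewrite (e2t_unit_row ord0).
  - by rewrite (e2t_unit_row ord_max).
split; [exact/W2_or_J2P | move=> t | exact/disjoint_rows2P].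
by case: (ord2P t) => ->; rewrite -e2t_unit_row.
Qed.

Lemma is_scrambling_index2 n (M : 'M[bool]_n) :
  is_scrambling_index M 2 <-> scrambling_at M 2 /\ ~ scrambling_at M 1.
Proof.
split=> [[_ [sc2 nsc]] | [sc2 nsc1]]; first by split=> //; apply: nsc.
by do 2!split=> //; case=> [|[|k]].
Qed.

Theorem theorem2p8 (n : nat) (M : 'M[bool]_n) :
  bool_primitive M -> is_bool_rank M 2 ->
  (is_scrambling_index M 2 <->
   exists (A : 'M[bool]_(n, 2)) (B : 'M[bool]_(2, n)),
     M = bmul A B /\
     (bmul B A = W2 \/ bmul B A = J2) /\
     (exists i : 'I_n, row i A = e2t 1) /\
     (exists i : 'I_n, row i A = e2t 2) /\
     (forall j : 'I_n, col j B <> e2sum)).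
Proof.
move=> prim [[A [B EM]] _]; subst M; split.
- case/is_scrambling_index2=> sc2 nsc1.
  have [A' [B' [-> /normal_factorP[BA A0 A1 dB]]]] :=
    scrambling_index2_normal_factor prim sc2 nsc1.
  by exists A', B'.
- case=> A' [B' [EM [BA [A0 [A1 dB]]]]]; rewrite EM in prim *.
  exact/is_scrambling_index2/(normal_factor_scrambling2 prim)/normal_factorP.
Qed.
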